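(* Let $\mathcal{X}\subseteq\mathbb{R}^n$ and let $h = p_k \circ \dots \circ p_1:\mathbb{R}^n \to \mathcal{Y}$ be a model, where each layer $p_r:\mathbb{R}^{n^{r-1}}\to\mathbb{R}^{n^r}$ ($n^0=n$). Let $g:\mathbb{R}^n\times\mathcal{Y} \to G$ be an explanation function (EF). For $m\in\{1,\dots,k\}$ write $f_m := p_m \circ \dots \circ p_1$. Suppose that for some $i \in \{1,\dots,k\}$, $f_i$ is a $\gamma(\epsilon)$-explainable representation with respect to $g$, for a function $\gamma:(0,\infty)\to(0,\infty)$. Let $j$ with $1\le j\le i$, and assume that $p_r$ is an $l_r$-Lipschitz function for every $r \in \{j+1,\dots,i\}$. Then $f_j$ is $\hat{\gamma}(\epsilon)$-explainable with respect to $g$, where $\hat{\gamma}(\epsilon) := \gamma\left(\epsilon \cdot \prod^{i}_{r=j+1} l_r \right)$.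
   Context: $G$ is a set of explanations equipped with a norm (or distance) written $|\cdot|$; the spaces $\mathbb{R}^{d}$ are also equipped with a norm $|\cdot|$, and Lipschitz continuity is with respect to these norms. For a model $h=c\circ f$ with representation $f:\mathcal{X}\to\mathbb{R}^d$ and an EF $g$, $f$ is called a $\gamma(\epsilon)$-explainable representation with respect to $g$ if for every $\epsilon\in(0,\infty)$ and all $x_1,x_2\in\mathcal{X}$: $|f(x_1)-f(x_2)|\le\epsilon$ implies $|g(x_1,h(x_1))-g(x_2,h(x_2))|\le\gamma(\epsilon)$. For the layered model, $f_m$ is regarded as the representation with $c=p_k\circ\dots\circ p_{m+1}$. *)

From mathcomp Require Import all_boot all_order all_algebra.
From mathcomp Require Import reals.
Set Implicit Arguments. Unset Strict Implicit. Unset Printing Implicit Defensive.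
Import Order.TTheory GRing.Theory Num.Theory.
Local Open Scope ring_scope.

Definition is_norm (R : realType) (d : nat) (N : 'rV[R]_d -> R) : Prop :=
  [/\ forall x, N x = 0 -> x = 0,
      forall (a : R) x, N (a *: x) = `|a| * N x
    & forall x y, N (x + y) <= N x + N y].

Definition lipschitz (R : realType) (a b : nat) (Na : 'rV[R]_a -> R)
  (Nb : 'rV[R]_b -> R) (l : R) (p : 'rV[R]_a -> 'rV[R]_b) : Prop :=
  forall x y, Nb (p x - p y) <= l * Na (x - y).

(* Layered model.  dims r = n^r (dims 0 = n).  [p r] is the paper's layer
   p_{r+1} : R^{n^r} -> R^{n^{r+1}}. *)
Fixpoint fcomp (R : realType) (dims : nat -> nat)
  (p : forall r, 'rV[R]_(dims r) -> 'rV[R]_(dims r.+1)) (m : nat)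
  : 'rV[R]_(dims 0) -> 'rV[R]_(dims m) :=
  match m with
  | 0 => fun x => x
  | m'.+1 => fun x => p m' (fcomp p m' x)
  end.
(* fcomp p m = f_m = p_m o ... o p_1 ; the model is h = fcomp p k. *)

Definition explainable_rep (R : realType) (n d : nat) (Y G : Type)
  (X : 'rV[R]_n -> Prop) (Nd : 'rV[R]_d -> R) (dG : G -> G -> R)
  (g : 'rV[R]_n -> Y -> G) (h : 'rV[R]_n -> Y)
  (f : 'rV[R]_n -> 'rV[R]_d) (gamma : R -> R) : Prop :=
  forall eps : R, 0 < eps -> forall x1 x2, X x1 -> X x2 ->
    Nd (f x1 - f x2) <= eps ->
    dG (g x1 (h x1)) (g x2 (h x2)) <= gamma eps.

(** Each Lipschitz layer stretches distances by at most its constant, so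
    |f_i x1 - f_i x2| <= (prod_{r=j+1}^{i} l_r) |f_j x1 - f_j x2|.  Hence inputs
    whose j-th representations are eps-close have i-th representations that
    are (eps * prod l_r)-close, and explainability of f_i applies. *)
From mathcomp Require Import all_boot all_order all_algebra.
From mathcomp Require Import reals.
Import Order.TTheory GRing.Theory Num.Theory.
Local Open Scope ring_scope.

Section LipschitzLayers.

Variables (R : realType) (dims : nat -> nat).
Variable p : forall r, 'rV[R]_(dims r) -> 'rV[R]_(dims r.+1).
Variable nrm : forall d, 'rV[R]_d -> R.
Variables (j : nat) (l : nat -> R).

Lemma fcomp_lipschitz_le (i : nat) :
  (j <= i)%N ->
  (forall r, (j <= r < i)%N ->
     0 <= l r.+1 /\ lipschitz (nrm (dims r)) (nrm (dims r.+1)) (l r.+1) (p r)) ->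
  forall x1 x2,
    nrm _ (fcomp p i x1 - fcomp p i x2)
      <= (\prod_(j.+1 <= r < i.+1) l r) * nrm _ (fcomp p j x1 - fcomp p j x2).
Proof.
move=> /subnKC <-; elim: (i - j)%N => [|d IHd] lip_layers x1 x2.
  by rewrite addn0 big_geq // mul1r.
have [l_ge0 lip_p] : 0 <= l (j + d).+1 /\
    lipschitz (nrm (dims (j + d))) (nrm _) (l (j + d).+1) (p (j + d)).
  by apply: lip_layers; rewrite leq_addr addnS ltnSn.
have IH : nrm _ (fcomp p (j + d) x1 - fcomp p (j + d) x2)
    <= (\prod_(j.+1 <= r < (j + d).+1) l r) * nrm _ (fcomp p j x1 - fcomp p j x2).
  by apply: IHd => r /andP[jr rd]; apply: lip_layers; rewrite jr addnS ltnS ltnW.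
rewrite addnS big_nat_recr /=; last by rewrite ltnS leq_addr.
apply: le_trans (lip_p _ _) _.
by rewrite [_ * l _]mulrC -mulrA ler_wpM2l // IH.
Qed.

Lemma prodr_index_gt0 (i : nat) :
  (forall r, (j <= r < i)%N -> 0 < l r.+1) ->
  0 < \prod_(j.+1 <= r < i.+1) l r.
Proof.
move=> l_gt0; rewrite big_nat_cond; apply: prodr_gt0 => r /andP[/andP[jr ri] _].
case: r jr ri => // r; rewrite !ltnS => jr ri.
by apply: l_gt0; rewrite jr ri.
Qed.

End LipschitzLayers.

Theorem theorem2 (R : realType) (dims : nat -> nat) (k : nat)
  (p : forall r, 'rV[R]_(dims r) -> 'rV[R]_(dims r.+1))
  (nrm : forall d, 'rV[R]_d -> R) (nrm_norm : forall d, is_norm (nrm d))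
  (X : 'rV[R]_(dims 0%N) -> Prop)
  (G : Type) (dG : G -> G -> R) (g : 'rV[R]_(dims 0%N) -> 'rV[R]_(dims k) -> G)
  (gamma : R -> R) (gamma_pos : forall e, 0 < e -> 0 < gamma e)
  (i j : nat) (l : nat -> R) :
  (1 <= j)%N -> (j <= i)%N -> (i <= k)%N ->
  explainable_rep X (nrm (dims i)) dG g (fcomp p k) (fcomp p i) gamma ->
  (forall r, (j <= r < i)%N ->
     0 < l r.+1 /\ lipschitz (nrm (dims r)) (nrm (dims r.+1)) (l r.+1) (p r)) ->
  explainable_rep X (nrm (dims j)) dG g (fcomp p k) (fcomp p j)
    (fun eps => gamma (eps * \prod_(j.+1 <= r < i.+1) l r)).
Proof.
move=> _ ji _ expl_i lip_layers eps eps_gt0 x1 x2 X1 X2 close_j.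
have prod_gt0 : 0 < \prod_(j.+1 <= r < i.+1) l r.
  by apply: (@prodr_index_gt0 R j l) => r /lip_layers [].
apply: expl_i => //; first exact: mulr_gt0.
apply: le_trans (@fcomp_lipschitz_le R dims p nrm j l i ji _ x1 x2) _.
  by move=> r /lip_layers [/ltW].
by rewrite mulrC ler_pM2r.
Qed.
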